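(* Let $(\mathcal{S},d_{\mathcal{S}})$, $(\mathcal{A},d_{\mathcal{A}})$ be metric spaces, $\gamma\in[0,1)$, $r$ a reward function, $\pi,\pi'$ policies with $\pi'$ being $L_{\pi'}$-LC, and $p,p'$ configurations. Then $$\big\|A_{\pi,p}^{\pi',p'}\big\|_L\le\big\|A_{\pi,p}^{\pi',p}\big\|_L+(L_{\pi'}+1)\big\|A_{\pi,p}^{\pi,p'}\big\|_L.$$
   Context: $r:\mathcal{S}\times\mathcal{A}\times\mathcal{S}\to\mathbb{R}$. A configuration is a Markov kernel $p(\cdot|s,a)$ on $\mathcal{S}$; a policy is a Markov kernel $\pi(\cdot|s)$ on $\mathcal{A}$. Value functions (assumed well defined): $V_{\pi,p}(s)=\int\pi(da|s)\int p(ds'|s,a)(r(s,a,s')+\gamma V_{\pi,p}(s'))$, $Q_{\pi,p}(s,a)=\int p(ds'|s,a)(r(s,a,s')+\gamma V_{\pi,p}(s'))$, $U_{\pi,p}(s,a,s')=r(s,a,s')+\gamma V_{\pi,p}(s')$. Relative advantages: $A_{\pi,p}^{\pi',p}(s)=\int\pi'(da|s)(Q_{\pi,p}(s,a)-V_{\pi,p}(s))$; $A_{\pi,p}^{\pi,p'}(s,a)=\int p'(ds'|s,a)(U_{\pi,p}(s,a,s')-Q_{\pi,p}(s,a))$, a function on $\mathcal{S}\times\mathcal{A}$; $A_{\pi,p}^{\pi',p'}(s)=\int\pi'(da|s)\int p'(ds'|s,a)(U_{\pi,p}(s,a,s')-V_{\pi,p}(s))$. $\|\cdot\|_L$ is the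 Lipschitz semi-norm, with $\mathcal{S}\times\mathcal{A}$ carrying the metric $d_{\mathcal{S}}(s,\bar s)+d_{\mathcal{A}}(a,\bar a)$. $\mathcal{W}(\mu,\nu)=\sup_{\|f\|_L\le1}|\int f\,d(\mu-\nu)|$, and $\pi'$ is $L_{\pi'}$-LC if $\mathcal{W}(\pi'(\cdot|s),\pi'(\cdot|\bar s))\le L_{\pi'}d_{\mathcal{S}}(s,\bar s)$ for all $s,\bar s$. *)

From HB Require Import structures.
From mathcomp Require Import all_boot all_order all_algebra.
From mathcomp Require Import all_classical all_reals all_analysis.
Set Implicit Arguments. Unset Strict Implicit. Unset Printing Implicit Defensive.
Import Order.TTheory GRing.Theory Num.Theory.
Local Open Scope classical_set_scope.
Local Open Scope ring_scope.

Section Defs.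
Variable R : realType.

Definition is_metric (T : Type) (d : T -> T -> R) : Prop :=
  (forall x y, 0 <= d x y) /\ (forall x y, d x y = 0 <-> x = y) /\
  (forall x y, d x y = d y x) /\ (forall x y z, d x z <= d x y + d y z).

(* Lipschitz semi-norm ||f||_L = sup_{x <> y} |f x - f y| / d(x,y)
   (value in \bar R, +oo if f is not Lipschitz; 0 on a one-point space) *)
Definition lipnorm (T : Type) (d : T -> T -> R) (f : T -> R) : \bar R :=
  ereal_sup [set e | e = 0%E \/
     exists x y, 0 < d x y /\ e = ((`|f x - f y| / d x y)%:E)].

Definition lipnorm2 (S A : Type) (dS : S -> S -> R) (dA : A -> A -> R)
    (f : S -> A -> R) : \bar R :=
  lipnorm (fun z w : S * A => dS z.1 w.1 + dA z.2 w.2) (fun z => f z.1 z.2).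

(* Kantorovich-Rubinstein (1-)Wasserstein distance:
   sup over 1-Lipschitz f (for which both integrals exist) of |∫f d(mu - nu)| *)
Definition wasserstein (d : measure_display) (T : measurableType d)
    (dT : T -> T -> R) (mu nu : probability T R) : \bar R :=
  ereal_sup [set e | exists f : T -> R,
     (forall x y, `|f x - f y| <= dT x y) /\
     mu.-integrable setT (EFin \o f) /\ nu.-integrable setT (EFin \o f) /\
     e = (`|Rintegral mu setT f - Rintegral nu setT f|)%:E].

Definition policy_LC (dS' dA' : measure_display) (S : measurableType dS')
    (A : measurableType dA') (dS : S -> S -> R) (dA : A -> A -> R)
    (pi : S -> probability A R) (L : R) : Prop :=
  forall s sb, (wasserstein dA (pi s) (pi sb) <= (L * dS s sb)%:E)%E.

Variables (dS' dA' : measure_display) (S : measurableType dS')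
  (A : measurableType dA').

Definition Ufun (gamma : R) (r : S -> A -> S -> R) (V : S -> R) s a s' : R :=
  r s a s' + gamma * V s'.

Definition Qfun (gamma : R) (r : S -> A -> S -> R) (V : S -> R)
    (p : S -> A -> probability S R) s a : R :=
  Rintegral (p s a) setT (Ufun gamma r V s a).

Definition adv_pol (gamma : R) r V p (pi' : S -> probability A R) (s : S) : R :=
  Rintegral (pi' s) setT (fun a => Qfun gamma r V p s a - V s).

Definition adv_conf (gamma : R) r V p (p' : S -> A -> probability S R)
    (s : S) (a : A) : R :=
  Rintegral (p' s a) setT (fun s' => Ufun gamma r V s a s' - Qfun gamma r V p s a).

Definition adv_both (gamma : R) r V (pi' : S -> probability A R)
    (p' : S -> A -> probability S R) (s : S) : R :=
  Rintegral (pi' s) setT (fun a =>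
    Rintegral (p' s a) setT (fun s' => Ufun gamma r V s a s' - V s)).

End Defs.

(* A^{pi',p'}(s) = A^{pi',p}(s) + G(s) with G(s) = ∫ pi'(da|s) f(s,a) and
   f = A^{pi,p'}, and the Lipschitz seminorm is subadditive, so it suffices to
   bound ||G||_L by (L_{pi'} + 1) ||f||_L.  Split G(s) - G(s̄) as
     [∫ f(s,.) dpi'(s) - ∫ f(s,.) dpi'(s̄)] + ∫ (f(s,.) - f(s̄,.)) dpi'(s̄).
   Since f(s,.) is ||f||_L-Lipschitz, Kantorovich-Rubinstein duality bounds the
   first term by ||f||_L W(pi'(s), pi'(s̄)) <= ||f||_L L_{pi'} d(s,s̄); the second
   is at most ||f||_L d(s,s̄) because f is ||f||_L-Lipschitz in s. *)

From mathcomp Require Import all_boot all_order all_algebra.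
From mathcomp Require Import all_classical all_reals all_analysis.
From mathcomp Require Import measurable_realfun ring.

Set Implicit Arguments.
Unset Strict Implicit.
Unset Printing Implicit Defensive.
Import Order.TTheory GRing.Theory Num.Theory.
Local Open Scope classical_set_scope.
Local Open Scope ring_scope.

Section Lipschitz_seminorm.
Variables (R : realType) (T : Type) (d : T -> T -> R).

Lemma lipnorm_ge0 (f : T -> R) : (0 <= lipnorm d f)%E.
Proof. by apply: ereal_sup_ubound; left. Qed.

Lemma lipnorm_leP (f : T -> R) (c : R) : 0 <= c ->
  (lipnorm d f <= c%:E)%E <->
  (forall x y, 0 < d x y -> `|f x - f y| <= c * d x y).
Proof.
move=> c0; split=> [fc x y dxy | fc].
  rewrite -ler_pdivrMr // -lee_fin; apply: le_trans fc.
  by apply: ereal_sup_ubound; right; exists x, y.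
apply: ge_ereal_sup => _ [->|[x [y [dxy ->]]]]; first by rewrite lee_fin.
by rewrite lee_fin ler_pdivrMr // fc.
Qed.

Lemma lipnorm_eq0 (f : T -> R) :
  (forall x y, 0 < d x y -> f x = f y) -> lipnorm d f = 0%E.
Proof.
move=> fxy; apply/eqP; rewrite eq_le lipnorm_ge0 andbT.
apply/(lipnorm_leP f (lexx 0%R)) => x y /fxy ->.
by rewrite subrr normr0 mul0r.
Qed.

Lemma lipnormD (f g : T -> R) :
  (lipnorm d (f \+ g)%R <= lipnorm d f + lipnorm d g)%E.
Proof.
have f0 := lipnorm_ge0 f; have g0 := lipnorm_ge0 g.
have gNy : lipnorm d g != -oo%E by rewrite gt_eqF // (lt_le_trans _ g0) ?ltNye.
case Ef : (lipnorm d f) f0 => [m| |] // m0; last by rewrite addye ?leey.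
case Eg : (lipnorm d g) g0 gNy => [n| |] // n0 _; last by rewrite addey ?leey.
rewrite lee_fin in m0 n0.
have /(lipnorm_leP _ m0) fm : (lipnorm d f <= m%:E)%E by rewrite Ef.
have /(lipnorm_leP _ n0) gn : (lipnorm d g <= n%:E)%E by rewrite Eg.
apply/lipnorm_leP; first exact: addr_ge0.
move=> x y dxy; rewrite /= opprD addrACA mulrDl.
by apply: le_trans (ler_normD _ _) _; apply: lerD; [exact: fm | exact: gn].
Qed.

Lemma lipnorm_lipschitz (f : T -> R) (c : R) : is_metric d ->
  (lipnorm d f <= c%:E)%E -> forall x y, `|f x - f y| <= c * d x y.
Proof.
move=> [d0 [deq _]] fc x y.
have c0 : 0 <= c by rewrite -lee_fin (le_trans (lipnorm_ge0 f)).
have [dxy|] := ltP 0 (d x y); first exact: (proj1 (lipnorm_leP f c0) fc).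
move=> dxy0; have /deq xy : d x y = 0 by apply/eqP; rewrite eq_le dxy0 d0.
by rewrite xy subrr normr0 mulr_ge0 ?d0.
Qed.

End Lipschitz_seminorm.

Lemma is_metric_add (R : realType) (S A : Type)
    (dS : S -> S -> R) (dA : A -> A -> R) :
  is_metric dS -> is_metric dA ->
  is_metric (fun z w : S * A => dS z.1 w.1 + dA z.2 w.2).
Proof.
move=> [dS0 [dSeq [dSC dStr]]] [dA0 [dAeq [dAC dAtr]]].
split; [|split; [|split]].
- by move=> z w; rewrite addr_ge0.
- move=> [s a] [t b] /=; split=> [/eqP | [-> ->]].
    by rewrite paddr_eq0 // => /andP[/eqP/dSeq -> /eqP/dAeq ->].
  by rewrite (proj2 (dSeq t t)) // (proj2 (dAeq b b)) // addr0.
- by move=> z w; rewrite dSC dAC.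
- by move=> z w u; rewrite addrACA; apply: lerD.
Qed.

Lemma lipnorm2_lipschitz (R : realType) (S A : Type)
    (dS : S -> S -> R) (dA : A -> A -> R) (f : S -> A -> R) (c : R) :
  is_metric dS -> is_metric dA -> (lipnorm2 dS dA f <= c%:E)%E ->
  forall s t a b, `|f s a - f t b| <= c * (dS s t + dA a b).
Proof.
move=> hS hA /(lipnorm_lipschitz (is_metric_add hS hA)) fc s t a b.
exact: (fc (s, a) (t, b)).
Qed.

Section probability_Rintegral.
Variables (R : realType) (d : measure_display) (T : measurableType d)
  (P : probability T R).

Lemma Rintegral_prob_cst (c : R) : Rintegral P setT (fun _ => c) = c.
Proof.
rewrite Rintegral_cst // (_ : fine _ = 1) ?mulr1 //.
by have /= -> := probability_setT P.
Qed.

Lemma probability_setT_neq0 : [set: T] !=set0.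
Proof.
apply/set0P/eqP => T0; have := probability_setT P.
by rewrite T0 measure0 => /esym/eqP; rewrite onee_eq0.
Qed.

Lemma Rintegral_subsingleton (g : T -> R) (t : T) :
  (forall x y : T, x = y) -> Rintegral P setT g = g t.
Proof.
move=> T1; rewrite -[RHS](Rintegral_prob_cst (g t)).
by apply: eq_Rintegral => x _; rewrite (T1 x t).
Qed.

Lemma Rintegral_subr_cst (g : T -> R) (c : R) : P.-integrable setT (EFin \o g) ->
  Rintegral P setT (fun x => g x - c) = Rintegral P setT g - c.
Proof.
move=> ig; rewrite RintegralB ?Rintegral_prob_cst //.
exact: finite_measure_integrable_cst.
Qed.

Lemma integrable_bounded_dist (g h : T -> R) (c : R) : measurable_fun setT h ->
  P.-integrable setT (EFin \o g) -> (forall x, `|h x - g x| <= c) ->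
  P.-integrable setT (EFin \o h).
Proof.
move=> mh ig hgc.
have ihg : P.-integrable setT (EFin \o (h \- g)).
  apply: (le_integrable measurableT _ _ (finite_measure_integrable_cst P c measurableT)).
  - apply/measurable_EFinP/measurable_funB => //.
    exact/measurable_EFinP/(measurable_int _ ig).
  - by move=> x _ /=; rewrite lee_fin (le_trans (hgc x)) ?ler_norm.
have -> : h = g \+ (h \- g) by apply/funext => x /=; rewrite subrKC.
exact: (integrableD _ ig ihg).
Qed.

Lemma Rintegral_dist_le (g h : T -> R) (c : R) :
  P.-integrable setT (EFin \o g) -> P.-integrable setT (EFin \o h) ->
  (forall x, `|g x - h x| <= c) ->
  `|Rintegral P setT g - Rintegral P setT h| <= c.
Proof.
move=> ig ih ghc; have igh := integrableB measurableT ig ih.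
rewrite -RintegralB //; apply: le_trans (le_normr_Rintegral _ igh) _ => //.
rewrite -[c in _ <= c]Rintegral_prob_cst; apply: le_Rintegral => //.
- exact: integrable_norm.
- exact: finite_measure_integrable_cst.
Qed.

End probability_Rintegral.

Section Kantorovich_Rubinstein.
Variables (R : realType) (d : measure_display) (A : measurableType d)
  (dA : A -> A -> R) (mu nu : probability A R).

Lemma wasserstein_ge0 :
  (forall x y, 0 <= dA x y) -> (0 <= wasserstein dA mu nu)%E.
Proof.
move=> dA0; apply: ereal_sup_ubound; exists (fun _ => 0).
split; first by move=> x y; rewrite subrr normr0.
do 2 (split; first exact: finite_measure_integrable_cst).
by rewrite !Rintegral_prob_cst subrr normr0.
Qed.

Lemma lipschitz_Rintegral_dist_le (h : A -> R) (c K : R) : 0 <= c ->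
  (forall x y, `|h x - h y| <= c * dA x y) ->
  mu.-integrable setT (EFin \o h) -> nu.-integrable setT (EFin \o h) ->
  (wasserstein dA mu nu <= K%:E)%E ->
  `|Rintegral mu setT h - Rintegral nu setT h| <= c * K.
Proof.
rewrite le_eqVlt => /predU1P[<- | c_gt0] hc imu inu WK.
  have [t _] := probability_setT_neq0 mu.
  have ht x : h x = h t.
    by apply/eqP; rewrite -subr_eq0 -normr_le0 -(mul0r (dA x t)) hc.
  have hE (P : probability A R) : Rintegral P setT h = h t.
    by rewrite -(Rintegral_prob_cst P (h t)); apply: eq_Rintegral => x _.
  by rewrite !hE subrr normr0 mul0r.
rewrite mulrC -ler_pdivrMr // -lee_fin; apply: le_trans WK.
apply: ereal_sup_ubound; exists (fun x => h x / c); split.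
  move=> x y; rewrite -mulrBl normrM normfV (gtr0_norm c_gt0).
  by rewrite ler_pdivrMr // mulrC hc.
split; first exact: (integrableZr measurableT c^-1 imu).
split; first exact: (integrableZr measurableT c^-1 inu).
by rewrite !RintegralZr // -mulrBl normrM normfV (gtr0_norm c_gt0).
Qed.

End Kantorovich_Rubinstein.

Lemma policy_LC_ge0 (R : realType) (kS kA : measure_display)
    (S : measurableType kS) (A : measurableType kA)
    (dS : S -> S -> R) (dA : A -> A -> R) (pi : S -> probability A R) (L : R)
    (s t : S) :
  policy_LC dS dA pi L -> (forall a b, 0 <= dA a b) -> 0 < dS s t -> 0 <= L.
Proof.
move=> hLC dA0 dst; have := le_trans (wasserstein_ge0 _ _ dA0) (hLC s t).
by rewrite lee_fin pmulr_lge0.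
Qed.

Section kernel_integral.
Variables (R : realType) (kS kA : measure_display)
  (S : measurableType kS) (A : measurableType kA)
  (dS : S -> S -> R) (dA : A -> A -> R) (pi : S -> probability A R) (L : R).
Hypotheses (hdS : is_metric dS) (hdA : is_metric dA)
  (hLC : policy_LC dS dA pi L).
Variable f : S -> A -> R.
Hypothesis f_int : forall s, (pi s).-integrable setT (EFin \o f s).

Lemma Rintegral_kernel_lipschitz (n : R) : 0 <= n ->
  (forall s t a b, `|f s a - f t b| <= n * (dS s t + dA a b)) ->
  forall s t, `|Rintegral (pi s) setT (f s) - Rintegral (pi t) setT (f t)|
                <= (L + 1) * n * dS s t.
Proof.
move=> n0 hf s t.
have [_ [dSeq _]] := hdS; have [_ [dAeq _]] := hdA.
have f_lipA a b : `|f s a - f s b| <= n * dA a b.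
  by rewrite -[dA a b]add0r -(proj2 (dSeq s s)) ?hf.
have f_lipS a : `|f s a - f t a| <= n * dS s t.
  by rewrite -[dS s t]addr0 -(proj2 (dAeq a a)) ?hf.
have f_s_int : (pi t).-integrable setT (EFin \o f s).
  apply: (integrable_bounded_dist _ (f_int t) f_lipS).
  exact/measurable_EFinP/(measurable_int _ (f_int s)).
have -> : Rintegral (pi s) setT (f s) - Rintegral (pi t) setT (f t) =
    (Rintegral (pi s) setT (f s) - Rintegral (pi t) setT (f s)) +
    (Rintegral (pi t) setT (f s) - Rintegral (pi t) setT (f t)).
  by rewrite addrA subrK.
have -> : (L + 1) * n * dS s t = n * (L * dS s t) + n * dS s t by ring.
apply: le_trans (ler_normD _ _) _; apply: lerD.
- exact: lipschitz_Rintegral_dist_le n0 f_lipA (f_int s) f_s_int (hLC s t).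
- exact: Rintegral_dist_le f_s_int (f_int t) f_lipS.
Qed.

Lemma lipnorm_Rintegral_kernel_le : 0 <= L ->
  (lipnorm dS (fun s => Rintegral (pi s) setT (f s))
     <= (L + 1)%:E * lipnorm2 dS dA f)%E.
Proof.
move=> L0; have L1 : 0 < L + 1 := ltr_wpDl L0 ltr01.
have : (0 <= lipnorm2 dS dA f)%E by exact: lipnorm_ge0.
case E : (lipnorm2 dS dA f) => [n| |] // n0; last by rewrite gt0_muley ?lte_fin ?leey.
rewrite lee_fin in n0; rewrite -EFinM; apply/lipnorm_leP; first exact: mulr_ge0 (ltW L1) n0.
move=> s t _; apply: Rintegral_kernel_lipschitz => //.
by apply: lipnorm2_lipschitz; rewrite ?E.
Qed.

End kernel_integral.

Section advantage_decomposition.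
Variables (R : realType) (kS kA : measure_display)
  (S : measurableType kS) (A : measurableType kA)
  (gamma : R) (r : S -> A -> S -> R) (V : S -> R)
  (p p' : S -> A -> probability S R) (pi' : S -> probability A R).

Local Notation U := (Ufun gamma r V).
Local Notation Q := (Qfun gamma r V p).

Lemma adv_conf_subsingleton : (forall x y : S, x = y) ->
  forall s a, adv_conf gamma r V p p' s a = 0.
Proof.
move=> S1 s a; rewrite /adv_conf (Rintegral_subsingleton _ _ s S1).
by rewrite /Qfun (Rintegral_subsingleton _ _ s S1) subrr.
Qed.

Hypotheses
  (U_int : forall s a, (p' s a).-integrable setT (EFin \o U s a))
  (Q_int : forall s, (pi' s).-integrable setT (EFin \o Q s))
  (EU_int : forall s, (pi' s).-integrable setT
     (EFin \o (fun a => Rintegral (p' s a) setT (U s a)))).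

Lemma adv_confE s a :
  adv_conf gamma r V p p' s a = Rintegral (p' s a) setT (U s a) - Q s a.
Proof. exact: Rintegral_subr_cst. Qed.

Lemma integrable_adv_conf s :
  (pi' s).-integrable setT (EFin \o adv_conf gamma r V p p' s).
Proof.
have -> : adv_conf gamma r V p p' s =
    (fun a => Rintegral (p' s a) setT (U s a) - Q s a).
  by apply/funext => a; rewrite adv_confE.
exact: (integrableB measurableT (EU_int s) (Q_int s)).
Qed.

Lemma adv_bothE s : adv_both gamma r V pi' p' s =
  adv_pol gamma r V p pi' s + Rintegral (pi' s) setT (adv_conf gamma r V p p' s).
Proof.
rewrite /adv_both /adv_pol (Rintegral_subr_cst _ (Q_int s)).
under eq_Rintegral => a _ do rewrite (Rintegral_subr_cst _ (U_int s a)).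
rewrite (Rintegral_subr_cst _ (EU_int s)) (eq_Rintegral _ (fun a _ => adv_confE s a)).
by rewrite (RintegralB _ (EU_int s) (Q_int s)) //; ring.
Qed.

End advantage_decomposition.

Theorem lemma5 (R : realType) (kS kA : measure_display)
  (S : measurableType kS) (A : measurableType kA)
  (dS : S -> S -> R) (dA : A -> A -> R)
  (hdS : is_metric dS) (hdA : is_metric dA)
  (gamma : R) (hg0 : 0 <= gamma) (hg1 : gamma < 1)
  (r : S -> A -> S -> R)
  (pi pi' : S -> probability A R) (Lpi' : R)
  (hLC : policy_LC dS dA pi' Lpi')
  (p p' : S -> A -> probability S R)
  (V : S -> R)
  (* V = V_{pi,p} is well defined: all integrals below exist and V solves
     V(s) = ∫ pi(da|s) ∫ p(ds'|s,a) (r(s,a,s') + gamma V(s')) *)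
  (hUp : forall s a, (p s a).-integrable setT (EFin \o Ufun gamma r V s a))
  (hUp' : forall s a, (p' s a).-integrable setT (EFin \o Ufun gamma r V s a))
  (hQpi : forall s, (pi s).-integrable setT (EFin \o Qfun gamma r V p s))
  (hQpi' : forall s, (pi' s).-integrable setT (EFin \o Qfun gamma r V p s))
  (hUpi' : forall s, (pi' s).-integrable setT
             (EFin \o (fun a => Rintegral (p' s a) setT (Ufun gamma r V s a))))
  (hV : forall s, V s = Rintegral (pi s) setT (Qfun gamma r V p s)) :
  (lipnorm dS (adv_both gamma r V pi' p')
   <= lipnorm dS (adv_pol gamma r V p pi')
      + (Lpi' + 1)%:E * lipnorm2 dS dA (adv_conf gamma r V p p'))%E.
Proof.
set f := adv_conf gamma r V p p'.
have -> : adv_both gamma r V pi' p' =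
    (adv_pol gamma r V p pi' \+ fun s => Rintegral (pi' s) setT (f s))%R.
  by apply/funext => s; rewrite (adv_bothE hUp' hQpi' hUpi').
apply: le_trans (lipnormD _ _ _) _; apply: leeD2l.
have [L0 | L_lt0] := leP 0 Lpi'.
  exact: lipnorm_Rintegral_kernel_le (integrable_adv_conf hUp' hQpi' hUpi') L0.
(* For [Lpi' < 0] the factor [(Lpi' + 1)%:E] may turn the second summand
   negative or [-oo]; but then [hLC] forces [S] to be a single point, where
   both seminorms vanish. *)
have [dS0 [dSeq _]] := hdS; have [dA0 _] := hdA.
have S1 (x y : S) : x = y.
  apply/dSeq/eqP; rewrite eq_le dS0 andbT leNgt; apply/negP => dxy.
  by have := policy_LC_ge0 hLC dA0 dxy; rewrite leNgt L_lt0.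
rewrite (lipnorm_eq0 (fun x y _ => congr1 _ (S1 x y))).
have -> : lipnorm2 dS dA f = 0%E.
  by apply: lipnorm_eq0 => z w _; rewrite /f !adv_conf_subsingleton.
by rewrite mule0.
Qed.
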